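(* Let $Q\in\mathcal{Q}(n,d,m)$ and let $A=(a_1,\dots,a_t)$, $t\geq1$, be a chain of paths in $Q$ such that $\underline{\delta}=2\sum_{i=1}^t\mathrm{mdeg}(a_i)\in\Omega_0(Q)$. Then $|\underline{\delta}|-mt-n_0\leq n$, where $n_0=0$ if $t=1$, $n_0=\#(V(a_1)\cap V(a_2))$ if $t=2$, and $n_0=\#(V(a_2)\cup\cdots\cup V(a_{t-1}))$ if $t\geq3$.
   Context: A quiver $Q$ is a finite oriented graph; for an arrow $a$, $a''$ is its tail and $a'$ its head. A path $a=a_1\cdots a_s$ ($a_i$ arrows) satisfies $a_i'=a_{i+1}''$; it is closed if $a_1''=a_s'$; $V(a)=\{a_1'',a_1',\dots,a_s'\}$, $A(a)=\{a_1,\dots,a_s\}$. A closed path is primitive if each vertex of $V(a)$ is the head of exactly one $a_i$. $m(Q)$ is the maximal degree of a primitive closed path; $Q$ is strongly connected if some closed path contains all vertices; $\mathcal{Q}(n,d,m)$ is the set of strongly connected quivers with $n$ vertices, $d$ arrows and $m(Q)=m$. The multidegree $\mathrm{mdeg}(a)\in\mathbb{N}^{\#A(Q)}$ of a path $a$ has $b$-component equal to the number of $i$ with $a_i=b$; $|\underline{\delta}|=\sum_b\delta_b$. $\Omega_0(Q)$ is the set of $\mathrm{mdeg}(h)$ for closed paths $h$ in $Q$ with $A(h)=A(Q)$. A chain of paths $(a_1,\dots,a_t)$ is an ordered sequence of primitive closed paths such that $V(a_i)\cap V(a_j)=\emptyset$ if $|i-j|>1$ and $V(a_i)\cap V(a_j)\neq\emptyset$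 if $|i-j|\leq1$. *)

From mathcomp Require Import all_boot.
Set Implicit Arguments. Unset Strict Implicit. Unset Printing Implicit Defensive.

(* A quiver: finite vertex type V, finite arrow type Ar, with
   tl a = a'' (tail) and hd a = a' (head). Multiple arrows/loops allowed. *)
Section Quiver.
Variables (V Ar : finType) (tl hd : Ar -> V).

Definition is_path (p : seq Ar) : bool :=
  if p is x :: s then path (fun a b => hd a == tl b) x s else false.

Definition is_closed (p : seq Ar) : bool :=
  if p is x :: s then path (fun a b => hd a == tl b) x s && (tl x == hd (last x s))
  else false.

Definition pverts (p : seq Ar) : {set V} :=
  if p is x :: s then [set v | v \in tl x :: map hd p] else set0.

Definition parrows (p : seq Ar) : {set Ar} := [set b | b \in p].

Definition is_primitive (p : seq Ar) : bool :=
  is_closed p && [forall v in pverts p, count (fun b => hd b == v) p == 1].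

Definition is_mQ (m : nat) : Prop :=
  (exists2 p, is_primitive p & size p = m) /\
  (forall p, is_primitive p -> size p <= m).

Definition strongly_connected : Prop :=
  exists2 p, is_closed p & pverts p = [set: V].

Definition in_Qndm (n d m : nat) : Prop :=
  [/\ #|V| = n, #|Ar| = d, strongly_connected & is_mQ m].

Definition mdeg (p : seq Ar) : {ffun Ar -> nat} := [ffun b => count_mem b p].

Definition absdeg (delta : {ffun Ar -> nat}) : nat := \sum_(b : Ar) delta b.

Definition in_Omega0 (delta : {ffun Ar -> nat}) : Prop :=
  exists h, [/\ is_closed h, parrows h = [set: Ar] & mdeg h = delta].

(* chain of paths (a_1,...,a_t), stored 0-indexed as a seq *)
Definition is_chain (A : seq (seq Ar)) : Prop :=
  (forall i, i < size A -> is_primitive (nth [::] A i)) /\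
  (forall i j, i < size A -> j < size A ->
     (j + 1 < i \/ i + 1 < j) -> [disjoint pverts (nth [::] A i) & pverts (nth [::] A j)]) /\
  (forall i j, i < size A -> j < size A ->
     (i <= j + 1 /\ j <= i + 1) -> ~~ [disjoint pverts (nth [::] A i) & pverts (nth [::] A j)]).

Definition chain_delta (A : seq (seq Ar)) : {ffun Ar -> nat} :=
  [ffun b => 2 * \sum_(a <- A) mdeg a b].

Definition chain_n0 (A : seq (seq Ar)) : nat :=
  match size A with
  | 0 | 1 => 0
  | 2 => #|pverts (nth [::] A 0) :&: pverts (nth [::] A 1)|
  | t => #|\bigcup_(1 <= i < t.-1) pverts (nth [::] A i)|
  end.

End Quiver.

(* Every primitive closed path a_i has exactly #V(a_i) arrows, so |delta| = 2 S with
   S = sum_i #V(a_i), and S <= m t since m(Q) bounds the degree of each a_i.  In a chain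
   a vertex lies in at most two of the sets V(a_i), and only if it lies in two consecutive
   ones; such a vertex belongs to the set counted by n_0, hence S <= n + n_0.  Adding the
   two bounds gives |delta| <= m t + n + n_0. *)
From mathcomp Require Import all_boot.
From mathcomp Require Import zify.

Set Implicit Arguments.
Unset Strict Implicit.
Unset Printing Implicit Defensive.

Lemma sum_count_mem (T : finType) (s : seq T) : \sum_(x : T) count_mem x s = size s.
Proof.
elim: s => [|y s IHs] /=; first by rewrite big1.
rewrite big_split /= IHs (bigD1 y) //= eqxx big1 // => x neq_xy.
by rewrite eq_sym (negbTE neq_xy).
Qed.

Lemma sum_card_set_mem (I T : finType) (W : I -> {set T}) :
  \sum_(i : I) #|W i| = \sum_(x : T) #|[set i | x \in W i]|.
Proof.
under eq_bigr do rewrite -sum1_card big_mkcond.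
rewrite exchange_big /=; apply: eq_bigr => x _.
by rewrite -sum1dep_card [RHS]big_mkcond.
Qed.

Lemma sum_count_eq_in (A : Type) (T : finType) (f : A -> T) (P : {set T}) (s : seq A) :
  \sum_(v in P) count (fun a => f a == v) s = count (fun a => f a \in P) s.
Proof.
elim: s => [|a s IHs] /=; first by rewrite big1.
rewrite big_split /= IHs; congr (_ + _).
have [Pfa|nPfa] := boolP (f a \in P).
  rewrite (bigD1 (f a)) //= eqxx big1 // => v /andP [_ /negbTE].
  by rewrite eq_sym => ->.
by rewrite big1 // => v Pv; case: eqP => // fa_v; rewrite fa_v Pv in nPfa.
Qed.

Section ChainOfSets.
Variables (T : finType) (W : nat -> {set T}) (t : nat).
Hypothesis far_disjoint :
  forall i j, i < t -> j < t -> j.+1 < i -> [disjoint W i & W j].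

(* The set whose cardinality is n_0. *)
Definition inner_overlap : {set T} :=
  if t == 2 then W 0 :&: W 1 else \bigcup_(1 <= k < t.-1) W k.

Lemma mem_chain_adjacent x i j : i < t -> j < t ->
  x \in W i -> x \in W j -> i <= j.+1 /\ j <= i.+1.
Proof.
move=> lt_it lt_jt xWi xWj.
suff: ~~ (j.+1 < i) && ~~ (i.+1 < j) by lia.
apply/andP; split; apply/negP => far.
- by have /disjointFr/(_ xWi) := far_disjoint lt_it lt_jt far; rewrite xWj.
- by have /disjointFr/(_ xWj) := far_disjoint lt_jt lt_it far; rewrite xWi.
Qed.

Lemma mem_inner_overlap x i : i.+1 < t -> x \in W i -> x \in W i.+1 ->
  x \in inner_overlap.
Proof.
move=> lt_it xWi xWi1; rewrite /inner_overlap.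
have [t2|t_neq2] := eqVneq t 2.
  have i0 : i = 0 by lia.
  by move: xWi xWi1; rewrite i0 inE => -> ->.
have [k k_i xWk] : exists2 k, 1 <= k < t.-1 & x \in W k.
  by have [i_gt0|] := posnP i; [exists i.+1 => //; lia | exists i => //; lia].
by rewrite (big_rem k) ?mem_index_iota //= inE xWk.
Qed.

Lemma card_chain_mem x :
  #|[set i : 'I_t | x \in W i]| <= 1 + (x \in inner_overlap).
Proof.
set I := [set i : 'I_t | _].
have [|/card_gt1P [i [j [Ii Ij neq_ij]]]] := leqP #|I| 1; first by move/leq_trans; apply.
rewrite !inE in Ii Ij.
have [adj_ij adj_ji] := mem_chain_adjacent (ltn_ord i) (ltn_ord j) Ii Ij.
have neq_ij' : i <> j :> nat by move/val_inj/eqP; rewrite (negbTE neq_ij).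
have -> : x \in inner_overlap.
  have [lt_ij|lt_ji] : i.+1 = j \/ j.+1 = i by lia.
  - by apply: (@mem_inner_overlap _ i); rewrite ?lt_ij.
  - by apply: (@mem_inner_overlap _ j); rewrite ?lt_ji.
have /subset_leq_card : I \subset [set i; j].
  apply/subsetP => k; rewrite !inE => Ik.
  have := mem_chain_adjacent (ltn_ord k) (ltn_ord i) Ik Ii.
  have := mem_chain_adjacent (ltn_ord k) (ltn_ord j) Ik Ij.
  by rewrite -!val_eqE /=; lia.
by rewrite cards2 neq_ij.
Qed.

Lemma sum_card_chain_le :
  \sum_(i < t) #|W i| <= #|T| + #|inner_overlap|.
Proof.
rewrite (sum_card_set_mem (fun i : 'I_t => W i)).
apply: (@leq_trans (\sum_x (1 + (x \in inner_overlap)))).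
  by apply: leq_sum => x _; apply: card_chain_mem.
by rewrite big_split /= sum1_card leq_add2l -sum1_card [X in _ <= X]big_mkcond.
Qed.

End ChainOfSets.

Section Quiver.
Variables (V Ar : finType) (tl hd : Ar -> V).

Lemma size_primitive p : is_primitive tl hd p -> size p = #|pverts tl hd p|.
Proof.
case/andP=> _ /forallP one_head.
have -> : #|pverts tl hd p| = \sum_(v in pverts tl hd p) count (fun b => hd b == v) p.
  rewrite -sum1_card; apply: eq_bigr => v Pv.
  by have /implyP/(_ Pv)/eqP -> := one_head v.
rewrite sum_count_eq_in -(count_predT p); apply: eq_in_count => b pb.
case: p pb {one_head} => // a s pb.
by rewrite /= inE in_cons; apply/esym/orP; right; exact: (map_f hd pb).
Qed.

Lemma absdeg_chain_delta (A : seq (seq Ar)) :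
  absdeg (chain_delta A) = 2 * \sum_(a <- A) size a.
Proof.
rewrite /absdeg; under eq_bigr do rewrite ffunE.
rewrite -big_distrr exchange_big /=; congr (2 * _).
by apply: eq_bigr => a _; rewrite -sum_count_mem; apply: eq_bigr => b _; rewrite ffunE.
Qed.

Lemma chain_n0_inner_overlap (A : seq (seq Ar)) :
  chain_n0 tl hd A = #|inner_overlap (fun i => pverts tl hd (nth [::] A i)) (size A)|.
Proof.
by rewrite /chain_n0 /inner_overlap; case: (size A) => [|[|[|t]]] //=;
  rewrite big_geq ?cards0.
Qed.

Lemma sum_size_chain_le (A : seq (seq Ar)) : is_chain tl hd A ->
  \sum_(a <- A) size a <= #|V| + chain_n0 tl hd A.
Proof.
case=> prim [far _]; rewrite chain_n0_inner_overlap.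
rewrite (big_nth [::]) big_mkord.
under eq_bigr => i _ do rewrite size_primitive ?prim //.
apply: sum_card_chain_le => i j lt_i lt_j far_ji.
by apply: far => //; left; rewrite addn1.
Qed.

End Quiver.

Theorem lemma3p7 (V Ar : finType) (tl hd : Ar -> V) (n d m : nat)
  (A : seq (seq Ar)) :
  in_Qndm tl hd n d m ->
  1 <= size A ->
  is_chain tl hd A ->
  in_Omega0 tl hd (chain_delta A) ->
  absdeg (chain_delta A) - m * size A - chain_n0 tl hd A <= n.
Proof.
move=> [card_V _ _ [_ max_prim]] _ chainA _.
have le_S_n := sum_size_chain_le chainA; rewrite card_V in le_S_n.
have le_S_mt : \sum_(a <- A) size a <= m * size A.
  rewrite mulnC -[size A]card_ord -sum_nat_const (big_nth [::]) big_mkord.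
  by apply: leq_sum => i _; apply/max_prim/chainA.1.
rewrite absdeg_chain_delta; lia.
Qed.
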